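(* Let $(X,Y)$ be distributed according to an $(\alpha,\lambda)$-locally consistent RBM with $\alpha>0$. Fix an observed node $u\in V_{obs}$, a subset $S\subseteq V_{obs}\setminus\{u\}$, and a configuration $x_S\in\{\pm1\}^{S}$. Then for every $v\in N_2(u)\setminus(S\cup\{u\})$, \[ \mathrm{Cov}(u,v\mid X_S=x_S)\;\ge\;\alpha^2 e^{-12\lambda}. \]
   Context: A Restricted Boltzmann Machine (RBM) with $n$ observed variables $X\in\{\pm1\}^n$ (indexed by $V_{obs}=[n]$) and $m$ latent variables $Y\in\{\pm1\}^m$ (indexed by $V_{lat}=[m]$) is the distribution $\Pr[X=x,Y=y]=\frac1Z\exp(x^TJy+h^Tx+g^Ty)$, where $J\in\mathbb R^{n\times m}$, $h\in\mathbb R^n$, $g\in\mathbb R^m$ are arbitrary (no sign constraints on $h,g$) and $Z$ is the normalizing constant. Its edge set is $E=\{(i,j):J_{ij}\neq0\}$. The RBM is $(\alpha,\lambda)$-locally consistent if: (i) for each $j\in[m]$, either $J_{ij}\ge0$ for all $i$ or $J_{ij}\le0$ for all $i$; (ii) $|J_{ij}|\ge\alpha$ for every $(i,j)\in E$; (iii) $\sum_j|J_{ij}|+|h_i|\le\lambda$ for all $i\in[n]$; (iv) $\sum_i|J_{ij}|+|g_j|\le\lambda$ for all $j\in[m]$. For an observed node $u$, $N_2(u)=\{i\in V_{obs}:\exists j\in[m],\ J_{ij}\ne0,\ J_{uj}\neq0\}$ (two-hop neighborhood). For observed $u,v$ and $S\subseteq V_{obs}\setminus\{u,v\}$ with configuration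 $x_S$ of positive probability, $\mathrm{Cov}(u,v\mid X_S=x_S)=\mathbb E[X_uX_v\mid X_S=x_S]-\mathbb E[X_u\mid X_S=x_S]\,\mathbb E[X_v\mid X_S=x_S]$. *)

From Stdlib Require Import Reals.
From mathcomp Require Import all_boot.
Set Implicit Arguments. Unset Strict Implicit. Unset Printing Implicit Defensive.

Local Open Scope R_scope.

Definition spin (b : bool) : R := if b then 1 else -1.

Section RBM.
Variables (n m : nat).
Variables (J : 'I_n -> 'I_m -> R) (h : 'I_n -> R) (g : 'I_m -> R).

Definition obs_conf := {ffun 'I_n -> bool}.
Definition lat_conf := {ffun 'I_m -> bool}.

Definition rbm_energy (x : obs_conf) (y : lat_conf) : R :=
  \big[Rplus/R0]_(i < n) (\big[Rplus/R0]_(j < m) (spin (x i) * J i j * spin (y j)))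
  + \big[Rplus/R0]_(i < n) (h i * spin (x i))
  + \big[Rplus/R0]_(j < m) (g j * spin (y j)).

Definition rbm_Z : R :=
  \big[Rplus/R0]_(x : obs_conf) (\big[Rplus/R0]_(y : lat_conf) (exp (rbm_energy x y))).

Definition rbm_prob (x : obs_conf) (y : lat_conf) : R :=
  exp (rbm_energy x y) / rbm_Z.

Definition agrees (S : {set 'I_n}) (xS x : obs_conf) : bool :=
  [forall i in S, x i == xS i].

Definition prob_cond (S : {set 'I_n}) (xS : obs_conf) : R :=
  \big[Rplus/R0]_(x | agrees S xS x) (\big[Rplus/R0]_(y : lat_conf) (rbm_prob x y)).

Definition cond_exp (S : {set 'I_n}) (xS : obs_conf) (f : obs_conf -> R) : R :=
  (\big[Rplus/R0]_(x | agrees S xS x) (\big[Rplus/R0]_(y : lat_conf) (f x * rbm_prob x y)))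
  / prob_cond S xS.

Definition cond_cov (S : {set 'I_n}) (xS : obs_conf) (u v : 'I_n) : R :=
  cond_exp S xS (fun x => spin (x u) * spin (x v))
  - cond_exp S xS (fun x => spin (x u)) * cond_exp S xS (fun x => spin (x v)).

Definition locally_consistent (alpha lambda : R) : Prop :=
  (forall j : 'I_m, (forall i, 0 <= J i j) \/ (forall i, J i j <= 0)) /\
  (forall i j, J i j <> 0 -> alpha <= Rabs (J i j)) /\
  (forall i : 'I_n, (\big[Rplus/R0]_(j < m) Rabs (J i j)) + Rabs (h i) <= lambda) /\
  (forall j : 'I_m, (\big[Rplus/R0]_(i < n) Rabs (J i j)) + Rabs (g j) <= lambda).

Definition in_N2 (u v : 'I_n) : Prop :=
  exists j : 'I_m, J v j <> 0 /\ J u j <> 0.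

End RBM.

(* A joint configuration (x, y) is encoded as a boolean configuration on the
   sites 'I_n + 'I_m, ordered upwards on observed sites and, on a latent
   site j, upwards or downwards according to the common sign of the column
   J _ j.  For this order every interaction x_i J_ij y_j is supermodular, so
   the Gibbs weight satisfies the FKG lattice condition. *)

From HB Require Import structures.
From Stdlib Require Import Reals Lra Psatz.
From mathcomp Require Import all_boot.
Set Implicit Arguments. Unset Strict Implicit. Unset Printing Implicit Defensive.
Local Open Scope R_scope.

HB.instance Definition _ := Monoid.isComLaw.Build R R0 Rplus
  (fun x y z => esym (Rplus_assoc x y z)) Rplus_comm Rplus_0_l.

Notation "\rsum_ ( i | P ) F" := (\big[Rplus/R0]_(i | P) F)
  (at level 41, F at level 41, i at level 50).

Lemma ler_rsum (I : finType) (P : pred I) (F G : I -> R) :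
  (forall i, P i -> F i <= G i) -> \rsum_(i | P i) F i <= \rsum_(i | P i) G i.
Proof.
move=> FG; elim/big_rec2: _ => [|i x y Pi]; first lra.
by have := FG i Pi; lra.
Qed.

Lemma rsum_ge0 (I : finType) (P : pred I) (F : I -> R) :
  (forall i, P i -> 0 <= F i) -> 0 <= \rsum_(i | P i) F i.
Proof.
move=> F0; elim/big_rec: _ => [|i x Pi]; first lra.
by have := F0 i Pi; lra.
Qed.

Lemma rsum_gt0 (I : finType) (P : pred I) (F : I -> R) i0 :
  (forall i, P i -> 0 <= F i) -> P i0 -> 0 < F i0 -> 0 < \rsum_(i | P i) F i.
Proof.
move=> F0 Pi0 Fi0; rewrite (bigD1 i0) //=.
have : 0 <= \rsum_(i | P i && (i != i0)) F i by apply: rsum_ge0 => i /andP[/F0].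
lra.
Qed.

Lemma rsum_mulr (I : finType) (P : pred I) (F : I -> R) c :
  \rsum_(i | P i) (F i * c) = (\rsum_(i | P i) F i) * c.
Proof. by elim/big_rec2: _ => [|i x y _ ->]; ring. Qed.

Lemma rsum_mull (I : finType) (P : pred I) (F : I -> R) c :
  \rsum_(i | P i) (c * F i) = c * \rsum_(i | P i) F i.
Proof. by elim/big_rec2: _ => [|i x y _ ->]; ring. Qed.

Lemma rsum_divr (I : finType) (P : pred I) (F : I -> R) c :
  \rsum_(i | P i) (F i / c) = (\rsum_(i | P i) F i) / c.
Proof. by elim/big_rec2: _ => [|i x y _ ->]; rewrite /Rdiv; ring. Qed.

Lemma rsum_abs (I : finType) (P : pred I) (F : I -> R) :
  Rabs (\rsum_(i | P i) F i) <= \rsum_(i | P i) Rabs (F i).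
Proof.
elim/big_rec2: _ => [|i x y _ IH]; first by rewrite Rabs_R0; lra.
by have := Rabs_triang (F i) y; lra.
Qed.

Lemma exp_le x y : x <= y -> exp x <= exp y.
Proof. by case/Rle_lt_or_eq_dec => [/exp_increasing|->]; lra. Qed.

Lemma spin_abs s : Rabs (spin s) = 1.
Proof. by case: s; rewrite /spin ?Rabs_Ropp Rabs_R1. Qed.

Lemma spin_mul s t : spin s * spin t = spin (s == t).
Proof. by case: s; case: t; rewrite /spin /=; ring. Qed.

Lemma ler_pdiv (x y a b : R) : 0 < a -> 0 < b -> x * b <= y * a -> x / a <= y / b.
Proof.
move=> a0 b0 xy; apply: (Rmult_le_reg_r (a * b)); first nra.
have -> : x / a * (a * b) = x * b by field; lra.
have -> : y / b * (a * b) = y * a by field; lra.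
exact: xy.
Qed.

Lemma ler_pdivr (a b c : R) : 0 < c -> a * c <= b -> a <= b / c.
Proof.
move=> c0 acb; have -> : a = a / 1 by field.
by apply: ler_pdiv; lra.
Qed.

(* The unnormalised covariance of f and g under the weights mu on the
   configurations satisfying P:  Z^2 Cov_mu(f, g) with Z = sum of mu. *)
Definition wcov (I : finType) (P : pred I) (mu f g : I -> R) : R :=
  (\rsum_(i | P i) mu i) * (\rsum_(i | P i) (mu i * f i * g i))
  - (\rsum_(i | P i) (mu i * f i)) * (\rsum_(i | P i) (mu i * g i)).

Lemma wcov_shift1 (I : finType) (P : pred I) (mu f g : I -> R) :
  wcov P mu (fun i => 1 + f i) (fun i => 1 + g i) = wcov P mu f g.
Proof.
rewrite /wcov.
have -> : \rsum_(i | P i) (mu i * (1 + f i) * (1 + g i)) =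
  \rsum_(i | P i) mu i + \rsum_(i | P i) (mu i * f i) + \rsum_(i | P i) (mu i * g i)
  + \rsum_(i | P i) (mu i * f i * g i).
  by rewrite -!big_split; apply: eq_bigr => i _ /=; ring.
have sh : forall k : I -> R, \rsum_(i | P i) (mu i * (1 + k i)) =
    \rsum_(i | P i) mu i + \rsum_(i | P i) (mu i * k i).
  by move=> k; rewrite -big_split; apply: eq_bigr => i _ /=; ring.
rewrite !sh; ring.
Qed.

(* Law of total covariance, as an inequality: if the covariance inside every
   fibre is at least kappa and the fibre means are positively correlated,
   the total covariance is at least kappa.  Here M, H are the fibre masses
   and second moments and f, g the fibre means. *)
Lemma total_covariance_bound (T : finType) (P : pred T) (M f g H : T -> R) (kappa : R) :
  (forall p, P p -> 0 < M p) ->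
  (forall p, P p -> kappa * M p <= H p - M p * f p * g p) ->
  (\rsum_(p | P p) (M p * f p)) * (\rsum_(p | P p) (M p * g p)) <=
    (\rsum_(p | P p) (M p * f p * g p)) * (\rsum_(p | P p) M p) ->
  kappa * ((\rsum_(p | P p) M p) * (\rsum_(p | P p) M p)) <=
  (\rsum_(p | P p) M p) * (\rsum_(p | P p) H p)
    - (\rsum_(p | P p) (M p * f p)) * (\rsum_(p | P p) (M p * g p)).
Proof.
move=> M0 local between.
have Z0 : 0 <= \rsum_(p | P p) M p by apply: rsum_ge0 => p /M0/Rlt_le.
have sum_local : kappa * (\rsum_(p | P p) M p) + \rsum_(p | P p) (M p * f p * g p)
    <= \rsum_(p | P p) H p.
  by rewrite -rsum_mull -big_split; apply: ler_rsum => p /local /=; lra.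
have := Rmult_le_compat_l _ _ _ Z0 sum_local; nra.
Qed.


Section OrientedLattice.
(* Boolean configurations on a finite site set I, ordered coordinatewise,
   where site i uses the order false < true when o i and the reverse order
   otherwise. *)
Variables (I : finType) (o : I -> bool).
Local Notation cfg := {ffun I -> bool}.
Implicit Types (A C : {set I}) (b p q : cfg).

Definition ojoin (c x y : bool) : bool := if c then x || y else x && y.
Definition omeet (c x y : bool) : bool := if c then x && y else x || y.
Definition join p q : cfg := [ffun i => ojoin (o i) (p i) (q i)].
Definition meet p q : cfg := [ffun i => omeet (o i) (p i) (q i)].

Definition within A b p : bool := [forall i, (i \notin A) ==> (p i == b i)].

Definition upd p c s : cfg := [ffun i => if i == c then s else p i].

Definition fkg_weight (mu : cfg -> R) : Prop :=
  forall p q, mu p * mu q <= mu (join p q) * mu (meet p q).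
Definition increasing (f : cfg -> R) : Prop := forall p q, f p <= f (join p q).

Lemma withinP A b p : reflect (forall i, i \notin A -> p i = b i) (within A b p).
Proof.
apply: (iffP forallP) => H i; last by apply/implyP => /H ->.
by move=> iA; move: (H i); rewrite iA => /eqP.
Qed.

Lemma within_refl A p : within A p p.
Proof. by apply/withinP. Qed.

Lemma within_trans A C b p q :
  C \subset A -> within (A :\: C) b p -> within C p q -> within A b q.
Proof.
move=> sCA /withinP bp /withinP pq; apply/withinP => i iA.
have iC : i \notin C by apply: contra iA; apply: (subsetP sCA).
by rewrite pq // bp // in_setD negb_and iA orbT.
Qed.

Lemma join_comm p q : join p q = join q p.
Proof.
by apply/ffunP => i; rewrite !ffunE /ojoin; case: (o i); [exact: orbC|exact: andbC].
Qed.

Lemma joinxx p : join p p = p.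
Proof. by apply/ffunP => i; rewrite !ffunE /ojoin; case: (o i); case: (p i). Qed.

Lemma meetxx p : meet p p = p.
Proof. by apply/ffunP => i; rewrite !ffunE /omeet; case: (o i); case: (p i). Qed.

Lemma meet_joinK p q : meet p (join p q) = p.
Proof.
by apply/ffunP => i; rewrite !ffunE /omeet /ojoin; case: (o i); case: (p i); case: (q i).
Qed.

Lemma join_joinA p q : join p (join p q) = join p q.
Proof.
by apply/ffunP => i; rewrite !ffunE /ojoin; case: (o i); case: (p i); case: (q i).
Qed.

Lemma upd_join p1 p2 c s t :
  join (upd p1 c s) (upd p2 c t) = upd (join p1 p2) c (ojoin (o c) s t).
Proof. by apply/ffunP => i; rewrite !ffunE; case: eqP => [->|]. Qed.

Lemma upd_meet p1 p2 c s t :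
  meet (upd p1 c s) (upd p2 c t) = upd (meet p1 p2) c (omeet (o c) s t).
Proof. by apply/ffunP => i; rewrite !ffunE; case: eqP => [->|]. Qed.

Lemma within_upd p c s : within [set c] p (upd p c s).
Proof. by apply/withinP => i; rewrite in_set1 ffunE => /negbTE ->. Qed.

Lemma sum_within_split A C b (F : cfg -> R) : C \subset A ->
  \rsum_(p | within A b p) F p =
  \rsum_(p | within (A :\: C) b p) \rsum_(q | within C p q) F q.
Proof.
move=> sCA; pose rest q : cfg := [ffun i => if i \in C then b i else q i].
rewrite (partition_big rest (within (A :\: C) b)); last first.
  move=> q /withinP bq; apply/withinP => i; rewrite ffunE in_setD negb_and negbK.
  by case: ifP => //= _ /bq.
apply: eq_bigr => p bp; apply: eq_bigl => q; apply/idP/idP.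
  by case/andP => _ /eqP <-; apply/withinP => i iC; rewrite ffunE (negbTE iC).
move=> pq; rewrite (within_trans sCA bp pq) /=; apply/eqP/ffunP => i.
rewrite ffunE; case: ifP => iC; last by move/withinP: pq => ->; rewrite ?iC.
by move/withinP: bp => ->; rewrite // in_setD iC.
Qed.

Lemma sum_within0 p (F : cfg -> R) : \rsum_(q | within set0 p q) F q = F p.
Proof.
apply: big_pred1 => q /=; apply/idP/idP; last by move/eqP ->; exact: within_refl.
by move/withinP => pq; apply/eqP/ffunP => i; rewrite pq ?in_set0.
Qed.

Lemma sum_within1 c p (F : cfg -> R) :
  \rsum_(q | within [set c] p q) F q = F (upd p c true) + F (upd p c false).
Proof.
rewrite (bigD1 (upd p c true)) ?within_upd //; congr (_ + _).
apply: big_pred1 => q /=; apply/idP/idP; last first.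
  move/eqP => ->; rewrite within_upd /=.
  by apply/negP => /eqP/ffunP/(_ c); rewrite !ffunE eqxx.
case/andP => /withinP pq qT; apply/eqP/ffunP => i; rewrite ffunE.
case: eqP => [->|/eqP ic]; last by rewrite pq // in_set1.
case qc: (q c) => //; case/eqP: qT; apply/ffunP => k; rewrite ffunE.
by case: eqP => [->|/eqP kc]; rewrite ?qc ?pq ?in_set1.
Qed.

(* The four functions theorem on the two-point lattice {0 < 1}; the mixed
   terms are handled by their product bound and the AM-GM-type inequality
   (c1 d0 - a0 b1)(c1 d0 - a1 b0) >= 0. *)
Lemma four_functions2 (a0 a1 b0 b1 c0 c1 d0 d1 : R) :
  0 <= a0 -> 0 <= a1 -> 0 <= b0 -> 0 <= b1 -> 0 <= c0 -> 0 <= c1 -> 0 <= d0 -> 0 <= d1 ->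
  a0 * b0 <= c0 * d0 -> a0 * b1 <= c1 * d0 -> a1 * b0 <= c1 * d0 -> a1 * b1 <= c1 * d1 ->
  (a0 + a1) * (b0 + b1) <= (c0 + c1) * (d0 + d1).
Proof.
move=> ha0 ha1 hb0 hb1 hc0 hc1 hd0 hd1 H00 H01 H10 H11.
have : 0 <= c1 * d0 by nra.
case/Rle_lt_or_eq_dec => c1d0.
- have cross : (a0 * b1) * (a1 * b0) <= (c0 * d1) * (c1 * d0).
    have -> : (a0 * b1) * (a1 * b0) = (a0 * b0) * (a1 * b1) by ring.
    have -> : (c0 * d1) * (c1 * d0) = (c0 * d0) * (c1 * d1) by ring.
    by apply: Rmult_le_compat => //; nra.
  have mid : a0 * b1 + a1 * b0 <= c1 * d0 + c0 * d1.
    apply: (Rmult_le_reg_r (c1 * d0)) => //.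
    have : (c1 * d0 - a0 * b1) * (c1 * d0 - a1 * b0) >= 0 by nra.
    nra.
  nra.
- have : a0 * b1 = 0 by nra.
  have : a1 * b0 = 0 by nra.
  nra.
Qed.

(* The four functions theorem (Ahlswede-Daykin) on the sublattice of
   configurations that are free in A and agree with a boundary condition
   outside A; stated for every A so that it can be proved by induction. *)
Definition four_functions_on A : Prop :=
  forall (b1 b2 : cfg) (f1 f2 f3 f4 : cfg -> R),
  (forall p, 0 <= f1 p) -> (forall p, 0 <= f2 p) ->
  (forall p, 0 <= f3 p) -> (forall p, 0 <= f4 p) ->
  (forall p q, within A b1 p -> within A b2 q -> f1 p * f2 q <= f3 (join p q) * f4 (meet p q)) ->
  (\rsum_(p | within A b1 p) f1 p) * (\rsum_(p | within A b2 p) f2 p) <=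
  (\rsum_(p | within A (join b1 b2) p) f3 p) * (\rsum_(p | within A (meet b1 b2) p) f4 p).

Lemma four_functions_set0 : four_functions_on set0.
Proof.
by move=> b1 b2 f1 f2 f3 f4 _ _ _ _ H; rewrite !sum_within0; apply: H; exact: within_refl.
Qed.

Lemma four_functions_set1 c : four_functions_on [set c].
Proof.
move=> b1 b2 f1 f2 f3 f4 h1 h2 h3 h4 H; rewrite !sum_within1.
have Hc s t : f1 (upd b1 c s) * f2 (upd b2 c t) <=
    f3 (upd (join b1 b2) c (ojoin (o c) s t)) * f4 (upd (meet b1 b2) c (omeet (o c) s t)).
  by rewrite -upd_join -upd_meet; apply: H; exact: within_upd.
move: (Hc true true) (Hc true false) (Hc false true) (Hc false false).
rewrite /ojoin /omeet; case: (o c) => /= HTT HTF HFT HFF; last exact: four_functions2.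
rewrite (Rplus_comm (f1 _)) (Rplus_comm (f2 _)) (Rplus_comm (f3 _)) (Rplus_comm (f4 _)).
exact: four_functions2.
Qed.

(* Adding a site: sum out the new coordinate first, then use the induction
   hypothesis on the fibre sums, which satisfy the hypothesis by the
   one-site case. *)
Lemma four_functions_setD1 A c : c \in A -> four_functions_on (A :\ c) -> four_functions_on A.
Proof.
move=> cA IH b1 b2 f1 f2 f3 f4 h1 h2 h3 h4 H.
have sCA : [set c] \subset A by rewrite sub1set.
rewrite !(sum_within_split _ _ sCA).
apply: IH; try by move=> p; apply: rsum_ge0 => q _.
move=> p q bp bq; apply: four_functions_set1 => // p' q' pp' qq'.
by apply: H; [exact: (within_trans sCA bp pp')|exact: (within_trans sCA bq qq')].
Qed.

Theorem four_functions A : four_functions_on A.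
Proof.
move: {2}#|A| (erefl #|A|) => k; elim: k A => [|k IHk] A cardA.
  by move/eqP: cardA; rewrite cards_eq0 => /eqP ->; exact: four_functions_set0.
have /card_gt0P[c cA] : (0 < #|A|)%N by rewrite cardA.
apply: (four_functions_setD1 cA); apply: IHk.
by move: cardA; rewrite (cardsD1 c) cA => -[].
Qed.

Theorem fkg A b (w f g : cfg -> R) :
  (forall p, 0 <= w p) -> (forall p, 0 <= f p) -> (forall p, 0 <= g p) ->
  fkg_weight w -> increasing f -> increasing g ->
  (\rsum_(p | within A b p) (w p * f p)) * (\rsum_(p | within A b p) (w p * g p)) <=
  (\rsum_(p | within A b p) (w p * f p * g p)) * (\rsum_(p | within A b p) w p).
Proof.
move=> w0 f0 g0 wfkg fi gi.
have := @four_functions A b b (fun p => w p * f p) (fun p => w p * g p)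
  (fun p => w p * f p * g p) w.
rewrite joinxx meetxx; apply => // [p|p|p|p q _ _].
- exact: Rmult_le_pos.
- exact: Rmult_le_pos.
- by apply: Rmult_le_pos => //; apply: Rmult_le_pos.
have fg : f p * g q <= f (join p q) * g (join p q).
  by apply: Rmult_le_compat => //; rewrite [join p q]join_comm.
have := wfkg p q; have := Rmult_le_pos _ _ (w0 p) (w0 q).
have := Rmult_le_pos _ _ (f0 p) (g0 q).
nra.
Qed.

Definition fiber_mass C (mu : cfg -> R) p : R := \rsum_(q | within C p q) mu q.
Definition fiber_mean C (mu f : cfg -> R) p : R :=
  (\rsum_(q | within C p q) (mu q * f q)) / fiber_mass C mu p.

Lemma fiber_mass_gt0 C (mu : cfg -> R) p : (forall q, 0 < mu q) -> 0 < fiber_mass C mu p.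
Proof.
move=> mu0; apply: (rsum_gt0 (i0 := p)) => [q _||]; last exact: mu0.
- exact/Rlt_le/mu0.
- exact: within_refl.
Qed.

(* The fibre mean of an increasing nonnegative function is increasing in the
   boundary condition: the four functions theorem on the fibre. *)
Lemma fiber_mean_increasing C (mu f : cfg -> R) :
  (forall p, 0 < mu p) -> (forall p, 0 <= f p) -> fkg_weight mu -> increasing f ->
  increasing (fiber_mean C mu f).
Proof.
move=> mu0 f0 mufkg fi p q.
have mu0' r : 0 <= mu r by exact/Rlt_le/mu0.
apply: ler_pdiv; try exact: fiber_mass_gt0.
have := @four_functions C p (join p q) (fun r => mu r * f r) mu (fun r => mu r * f r) mu.
rewrite join_joinA meet_joinK; apply => [r|//|r|//|r r' _ _]; try exact: Rmult_le_pos.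
have := mufkg r r'; have := fi r r'; have := mu0 r; have := mu0 r'; have := f0 r.
have := Rmult_le_pos _ _ (mu0' (join r r')) (mu0' (meet r r')).
nra.
Qed.

(* Lower bound on a covariance from lower bounds on the covariances inside
   the C-fibres, for increasing nonnegative functions of an FKG weight:
   the within-fibre part is bounded by hypothesis, the between-fibre part
   is nonnegative by the FKG inequality applied to the fibre means. *)
Theorem covariance_from_fibers A C b (mu f g : cfg -> R) kappa :
  C \subset A ->
  (forall p, 0 < mu p) -> (forall p, 0 <= f p) -> (forall p, 0 <= g p) ->
  fkg_weight mu -> increasing f -> increasing g ->
  (forall p, kappa * (fiber_mass C mu p * fiber_mass C mu p) <= wcov (within C p) mu f g) ->
  kappa * (fiber_mass A mu b * fiber_mass A mu b) <= wcov (within A b) mu f g.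
Proof.
move=> sCA mu0 f0 g0 mufkg fi gi local.
set M := fiber_mass C mu.
have M0 p : 0 < M p by exact: fiber_mass_gt0.
have meanK (k : cfg -> R) p :
    \rsum_(q | within C p q) (mu q * k q) = M p * fiber_mean C mu k p.
  by rewrite /fiber_mean -/(M p); field; have := M0 p; lra.
have mean0 (k : cfg -> R) : (forall p, 0 <= k p) -> forall p, 0 <= fiber_mean C mu k p.
  move=> k0 p; apply: Rmult_le_pos; last exact/Rlt_le/Rinv_0_lt_compat/M0.
  by apply: rsum_ge0 => q _; apply: Rmult_le_pos => //; exact/Rlt_le/mu0.
rewrite /wcov /fiber_mass !(sum_within_split _ _ sCA) -/(fiber_mass C mu _).
rewrite !(eq_bigr _ (fun p _ => meanK _ p)).
apply: (total_covariance_bound (M := M)) => [p _|p _|]; first exact: M0.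
  apply: (Rmult_le_reg_l (M p)); first exact: M0.
  have := local p; rewrite /wcov !meanK -/(fiber_mass C mu p) -/(M p).
  by have := M0 p; nra.
have mu0' r : 0 <= mu r by exact/Rlt_le/mu0.
apply: fkg.
- by move=> p; exact/Rlt_le/M0.
- exact: mean0.
- exact: mean0.
- by move=> p q; apply: four_functions => // r r' _ _; exact: mufkg.
- exact: fiber_mean_increasing.
- exact: fiber_mean_increasing.
Qed.

End OrientedLattice.

Definition sum_spins3 (F : bool -> bool -> bool -> R) : R :=
  (F true true true + F false true true) + (F true false true + F false false true) +
  ((F true true false + F false true false) + (F true false false + F false false false)).

(* Gibbs weight of the triangle u - j0 - v (spins a, b observed, c latent)
   once every other spin is frozen: K collects the frozen part, Au, Av, B
   are the effective external fields and Ju, Jv the two couplings. *)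
Definition triangle_weight (K Au Av B Ju Jv : R) (a b c : bool) : R :=
  exp (K + spin a * Au + spin b * Av + spin c * B
       + Ju * (spin a * spin c) + Jv * (spin b * spin c)).

(* exp (2t) - exp (-2t) = 2 sinh (2t), the factor contributed by a coupling. *)
Definition exp_gap (t : R) : R := exp (2 * t) - exp (- (2 * t)).

Lemma exp_spin_mul s x : exp (spin s * x) = if s then exp x else / exp x.
Proof. by case: s; rewrite /spin ?Rmult_1_l // -exp_Ropp; congr exp; ring. Qed.

Lemma triangle_weightE K Au Av B Ju Jv a b c :
  triangle_weight K Au Av B Ju Jv a b c =
  exp K * exp (spin a * Au) * exp (spin b * Av) * exp (spin c * B)
  * exp (spin (a == c) * Ju) * exp (spin (b == c) * Jv).
Proof. by rewrite /triangle_weight !spin_mul -!exp_plus; congr exp; ring. Qed.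

Lemma triangle_covariance K Au Av B Ju Jv :
  let F := triangle_weight K Au Av B Ju Jv in
  sum_spins3 F * sum_spins3 (fun a b c => F a b c * (1 + spin a) * (1 + spin b))
  - sum_spins3 (fun a b c => F a b c * (1 + spin a))
    * sum_spins3 (fun a b c => F a b c * (1 + spin b))
  = 4 * exp (2 * K) * (exp_gap Ju * exp_gap Jv).
Proof.
move=> F; rewrite /F /sum_spins3 /exp_gap !triangle_weightE !exp_spin_mul /= /spin.
have e2 x : exp (2 * x) = exp x * exp x by rewrite -exp_plus; congr exp; ring.
have en2 x : exp (- (2 * x)) = / exp x * / exp x by rewrite -!exp_Ropp -exp_plus; congr exp; ring.
rewrite !e2 !en2; field.
by repeat split; apply: Rgt_not_eq; apply: exp_pos.
Qed.

(* From exp (4t) >= 1 + 4t: the gap grows at least linearly, damped by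
   exp (-2t) >= exp (-2 lambda). *)
Lemma exp_gap_lb alpha lambda t :
  0 <= alpha -> alpha <= t <= lambda -> 4 * alpha * exp (-2 * lambda) <= exp_gap t.
Proof.
move=> alpha0 [alpha_t t_lambda]; rewrite /exp_gap.
have -> : exp (2 * t) = exp (-2 * t) * exp (4 * t) by rewrite -exp_plus; congr exp; ring.
have -> : exp (- (2 * t)) = exp (-2 * t) by congr exp; ring.
have := exp_ineq1_le (4 * t); have := @exp_le (-2 * lambda) (-2 * t) ltac:(lra).
have := exp_pos (-2 * lambda); nra.
Qed.

Lemma exp_gap_opp t : exp_gap (- t) = - exp_gap t.
Proof.
rewrite /exp_gap; have -> : - (2 * - t) = 2 * t by ring.
have -> : 2 * - t = - (2 * t) by ring.
ring.
Qed.

Lemma exp_gap_prod_lb alpha lambda Ju Jv :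
  0 < alpha -> 0 <= Ju * Jv ->
  alpha <= Rabs Ju <= lambda -> alpha <= Rabs Jv <= lambda ->
  (4 * alpha * exp (-2 * lambda)) * (4 * alpha * exp (-2 * lambda)) <= exp_gap Ju * exp_gap Jv.
Proof.
move=> alpha0 sameJ Ju_bd Jv_bd.
have c0 : 0 <= 4 * alpha * exp (-2 * lambda) by have := exp_pos (-2 * lambda); nra.
case: (Rle_lt_dec 0 Ju) => [Ju0|Ju0].
- rewrite Rabs_right in Ju_bd; last lra.
  have Jv0 : 0 <= Jv by nra.
  rewrite Rabs_right in Jv_bd; last lra.
  by apply: Rmult_le_compat => //; apply: exp_gap_lb => //; lra.
- have Jv0 : Jv <= 0 by nra.
  rewrite Rabs_left in Ju_bd; last lra.
  rewrite Rabs_left1 in Jv_bd; last lra.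
  have -> : exp_gap Ju * exp_gap Jv = exp_gap (- Ju) * exp_gap (- Jv).
    by rewrite !exp_gap_opp; ring.
  by apply: Rmult_le_compat => //; apply: exp_gap_lb => //; lra.
Qed.

Lemma triangle_weight_le K Au Av B Ju Jv lambda a b c :
  Rabs Au + Rabs Ju <= lambda -> Rabs Av + Rabs Jv <= lambda -> Rabs B <= lambda ->
  triangle_weight K Au Av B Ju Jv a b c <= exp (K + 3 * lambda).
Proof.
move=> Hu Hv HB; rewrite /triangle_weight; apply: exp_le.
have abs_spin s x : spin s * x <= Rabs x.
  by case: s; rewrite /spin; [have := Rle_abs x|have := Rle_abs (- x); rewrite Rabs_Ropp]; lra.
have := abs_spin a Au; have := abs_spin b Av; have := abs_spin c B.
have := abs_spin (a == c) Ju; have := abs_spin (b == c) Jv.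
rewrite !spin_mul; lra.
Qed.

Lemma ler_sum_spins3 (F G : bool -> bool -> bool -> R) :
  (forall a b c, F a b c <= G a b c) -> sum_spins3 F <= sum_spins3 G.
Proof.
move=> FG; rewrite /sum_spins3.
by do 8 (apply: Rplus_le_compat || apply: FG).
Qed.

Lemma triangle_covariance_lb K Au Av B Ju Jv alpha lambda :
  0 < alpha ->
  Rabs Au + Rabs Ju <= lambda -> Rabs Av + Rabs Jv <= lambda -> Rabs B <= lambda ->
  alpha <= Rabs Ju -> alpha <= Rabs Jv -> 0 <= Ju * Jv ->
  let F := triangle_weight K Au Av B Ju Jv in
  alpha ^ 2 * exp (-12 * lambda) * (sum_spins3 F * sum_spins3 F) <=
  sum_spins3 F * sum_spins3 (fun a b c => F a b c * (1 + spin a) * (1 + spin b))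
  - sum_spins3 (fun a b c => F a b c * (1 + spin a))
    * sum_spins3 (fun a b c => F a b c * (1 + spin b)).
Proof.
move=> alpha0 Hu Hv HB Ju_ge Jv_ge sameJ F; rewrite triangle_covariance.
have Ju_le : Rabs Ju <= lambda by have := Rabs_pos Au; lra.
have Jv_le : Rabs Jv <= lambda by have := Rabs_pos Av; lra.
have gaps := exp_gap_prod_lb alpha0 sameJ (conj Ju_ge Ju_le) (conj Jv_ge Jv_le).
set E := exp (K + 3 * lambda).
have Z0 : 0 <= sum_spins3 F.
  have -> : 0 = sum_spins3 (fun _ _ _ => 0) by rewrite /sum_spins3; ring.
  by apply: ler_sum_spins3 => a b c; apply/Rlt_le/exp_pos.
have Zmax : sum_spins3 F <= 8 * E.
  have -> : 8 * E = sum_spins3 (fun _ _ _ => E) by rewrite /sum_spins3; ring.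
  by apply: ler_sum_spins3 => a b c; apply: triangle_weight_le.
have E2 : exp (-12 * lambda) * (E * E) = exp (2 * K) * exp (-6 * lambda).
  by rewrite /E -!exp_plus; congr exp; ring.
have E4 : exp (-2 * lambda) * exp (-2 * lambda) = exp (-4 * lambda).
  by rewrite -exp_plus; congr exp; ring.
have decay := @exp_le (-6 * lambda) (-4 * lambda) ltac:(have := Rabs_pos B; lra).
have a2 : 0 <= alpha ^ 2 by nra.
have eK := exp_pos (2 * K); have e12 := exp_pos (-12 * lambda).
apply: (Rle_trans _ (alpha ^ 2 * exp (-12 * lambda) * (64 * (E * E)))).
  by apply: Rmult_le_compat_l; nra.
have -> : alpha ^ 2 * exp (-12 * lambda) * (64 * (E * E))
  = 64 * alpha ^ 2 * (exp (2 * K) * exp (-6 * lambda)) by rewrite -E2; ring.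
apply: (Rle_trans _ (64 * alpha ^ 2 * (exp (2 * K) * exp (-4 * lambda)))).
  by apply: Rmult_le_compat_l; [nra|apply: Rmult_le_compat_l; lra].
have -> : 64 * alpha ^ 2 * (exp (2 * K) * exp (-4 * lambda)) =
  4 * exp (2 * K) * ((4 * alpha * exp (-2 * lambda)) * (4 * alpha * exp (-2 * lambda))).
  by rewrite -E4; ring.
by apply: Rmult_le_compat_l => //; lra.
Qed.

Section ThreeSites.
Variable I : finType.
Implicit Types (C : {set I}) (p : {ffun I -> bool}).

Lemma sum_within_setU1 c C p (F : {ffun I -> bool} -> R) : c \notin C ->
  \rsum_(q | within (c |: C) p q) F q =
  \rsum_(r | within C p r) (F (upd r c true) + F (upd r c false)).
Proof.
move=> cC; have sub : [set c] \subset c |: C by rewrite sub1set setU11.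
rewrite (sum_within_split _ _ sub) setU1K //.
by apply: eq_bigr => r _; rewrite sum_within1.
Qed.

Lemma sum_within3 c1 c2 c3 p (F : {ffun I -> bool} -> R) :
  c1 != c2 -> c1 != c3 -> c2 != c3 ->
  \rsum_(q | within (c1 |: (c2 |: [set c3])) p q) F q =
  sum_spins3 (fun a b c => F (upd (upd (upd p c3 c) c2 b) c1 a)).
Proof.
move=> c12 c13 c23.
rewrite sum_within_setU1; last by rewrite !inE negb_or c12 c13.
rewrite (sum_within_setU1 (c := c2) (C := [set c3]) p
  (fun r => F (upd r c1 true) + F (upd r c1 false))); last by rewrite inE.
by rewrite sum_within1.
Qed.

End ThreeSites.

Section RBMLattice.
Variables (n m : nat) (J : 'I_n -> 'I_m -> R) (h : 'I_n -> R) (g : 'I_m -> R).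

Definition site := ('I_n + 'I_m)%type.
Local Notation jcfg := {ffun site -> bool}.

Definition col_nonneg (j : 'I_m) : bool := [forall i, Rle_dec 0 (J i j)].
Definition orientation (k : site) : bool :=
  if k is inr j then col_nonneg j else true.
Definition obs_part (q : jcfg) : obs_conf n := [ffun i => q (inl i)].
Definition lat_part (q : jcfg) : lat_conf m := [ffun j => q (inr j)].
Definition joint_energy (q : jcfg) : R := rbm_energy J h g (obs_part q) (lat_part q).
Definition joint_weight (q : jcfg) : R := exp (joint_energy q).
(* The observed spin x_i, shifted to be nonnegative. *)
Definition shifted_spin (i : 'I_n) (q : jcfg) : R := 1 + spin (obs_part q i).

Hypothesis sign_consistent : forall j : 'I_m, (forall i, 0 <= J i j) \/ (forall i, J i j <= 0).

Lemma col_nonnegP j :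
  (col_nonneg j -> forall i, 0 <= J i j) /\ (~~ col_nonneg j -> forall i, J i j <= 0).
Proof.
split; first by move/forallP => Hj i; move: (Hj i); case: Rle_dec.
move=> Hj; case: (sign_consistent j) => // J0; case/negP: Hj.
by apply/forallP => i; case: Rle_dec => // /(_ (J0 i)).
Qed.

Lemma interaction_supermodular (c a b a' b' : bool) (x : R) :
  (c -> 0 <= x) -> (~~ c -> x <= 0) ->
  spin a * x * spin b + spin a' * x * spin b' <=
  spin (a || a') * x * spin (ojoin c b b') + spin (a && a') * x * spin (omeet c b b').
Proof.
rewrite /ojoin /omeet; case: c => [/(_ erefl)|_ /(_ erefl)] x_sign;
  by case: a; case: b; case: a'; case: b'; rewrite /spin /=; lra.
Qed.

Lemma field_modular (c a a' : bool) (x : R) :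
  x * spin a + x * spin a' = x * spin (ojoin c a a') + x * spin (omeet c a a').
Proof. by rewrite /ojoin /omeet; case: c; case: a; case: a'; rewrite /spin /=; ring. Qed.

Lemma energy_supermodular p q :
  joint_energy p + joint_energy q <=
  joint_energy (join orientation p q) + joint_energy (meet orientation p q).
Proof.
have add3 (a b c a' b' c' A B C A' B' C' : R) : a + a' <= A + A' -> b + b' = B + B' ->
    c + c' = C + C' -> a + b + c + (a' + b' + c') <= A + B + C + (A' + B' + C') by lra.
rewrite /joint_energy /rbm_energy; apply: add3; rewrite -!big_split.
- apply: ler_rsum => i _; rewrite -!big_split; apply: ler_rsum => j _ /=.
  rewrite !ffunE /=; case: (col_nonnegP j) => Jpos Jneg.
  by apply: interaction_supermodular => [/Jpos|/Jneg].
- by apply: eq_bigr => i _; rewrite !ffunE; exact: (field_modular true).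
- by apply: eq_bigr => j _; rewrite !ffunE; exact: field_modular.
Qed.

Lemma shifted_spin_increasing i : increasing orientation (shifted_spin i).
Proof.
move=> p q; rewrite /shifted_spin !ffunE /ojoin /=.
by case: (p _); case: (q _); rewrite /spin /=; lra.
Qed.

Lemma shifted_spin_ge0 i q : 0 <= shifted_spin i q.
Proof. by rewrite /shifted_spin /spin; case: (obs_part q i); lra. Qed.

Lemma joint_weight_fkg : fkg_weight orientation joint_weight.
Proof. by move=> p q; rewrite /joint_weight -!exp_plus; apply/exp_le/energy_supermodular. Qed.

Section Triangle.
Variables (u v : 'I_n) (j0 : 'I_m).
Hypothesis vu : v != u.

Local Notation rest_obs i := ((i != u) && (i != v)).

Definition frozen_energy (x : obs_conf n) (y : lat_conf m) : R :=
  \rsum_(i | rest_obs i) \rsum_(j | j != j0) (spin (x i) * J i j * spin (y j))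
  + \rsum_(i | rest_obs i) (h i * spin (x i))
  + \rsum_(j | j != j0) (g j * spin (y j)).
Definition obs_field (w : 'I_n) (y : lat_conf m) : R :=
  \rsum_(j | j != j0) (J w j * spin (y j)) + h w.
Definition lat_field (x : obs_conf n) : R :=
  \rsum_(i | rest_obs i) (J i j0 * spin (x i)) + g j0.

Lemma energy_triangle_split x y : rbm_energy J h g x y =
  frozen_energy x y + spin (x u) * obs_field u y + spin (x v) * obs_field v y
  + spin (y j0) * lat_field x
  + J u j0 * (spin (x u) * spin (y j0)) + J v j0 * (spin (x v) * spin (y j0)).
Proof.
have split_uv (F : 'I_n -> R) :
    \big[Rplus/R0]_(i < n) F i = F u + (F v + \rsum_(i | rest_obs i) F i).
  by rewrite (bigD1 u) //= (bigD1 v).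
have split_j0 (F : 'I_m -> R) :
    \big[Rplus/R0]_(j < m) F j = F j0 + \rsum_(j | j != j0) F j.
  by rewrite (bigD1 j0).
have row w : \big[Rplus/R0]_(j < m) (spin (x w) * J w j * spin (y j)) =
    spin (x w) * J w j0 * spin (y j0) + spin (x w) * \rsum_(j | j != j0) (J w j * spin (y j)).
  by rewrite split_j0 -rsum_mull; congr (_ + _); apply: eq_bigr => j _; ring.
have rest_rows : \rsum_(i | rest_obs i) \big[Rplus/R0]_(j < m) (spin (x i) * J i j * spin (y j)) =
    (\rsum_(i | rest_obs i) (J i j0 * spin (x i))) * spin (y j0)
    + \rsum_(i | rest_obs i) \rsum_(j | j != j0) (spin (x i) * J i j * spin (y j)).
  rewrite -rsum_mulr -big_split; apply: eq_bigr => i _.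
  by rewrite split_j0 /=; congr (_ + _); ring.
rewrite /rbm_energy !split_uv rest_rows !row split_j0.
by rewrite /frozen_energy /obs_field /lat_field; ring.
Qed.

Definition set_triangle (p : jcfg) (a b c : bool) : jcfg :=
  upd (upd (upd p (inr j0) c) (inl v) b) (inl u) a.

Lemma obs_part_set_triangle p a b c i : obs_part (set_triangle p a b c) i =
  if i == u then a else if i == v then b else obs_part p i.
Proof. by rewrite /set_triangle !ffunE. Qed.

Lemma lat_part_set_triangle p a b c j :
  lat_part (set_triangle p a b c) j = if j == j0 then c else lat_part p j.
Proof. by rewrite /set_triangle !ffunE. Qed.

Lemma weight_set_triangle p a b c : joint_weight (set_triangle p a b c) =
  triangle_weight (frozen_energy (obs_part p) (lat_part p)) (obs_field u (lat_part p))
    (obs_field v (lat_part p)) (lat_field (obs_part p)) (J u j0) (J v j0) a b c.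
Proof.
rewrite /joint_weight /joint_energy energy_triangle_split /triangle_weight.
have ex i : rest_obs i -> obs_part (set_triangle p a b c) i = obs_part p i.
  by case/andP => /negbTE iu /negbTE iv; rewrite obs_part_set_triangle iu iv.
have ey j : j != j0 -> lat_part (set_triangle p a b c) j = lat_part p j.
  by move/negbTE => jj0; rewrite lat_part_set_triangle jj0.
have eK : frozen_energy (obs_part (set_triangle p a b c)) (lat_part (set_triangle p a b c)) =
    frozen_energy (obs_part p) (lat_part p).
  rewrite /frozen_energy; congr (_ + _ + _).
  - by apply: eq_bigr => i Hi; apply: eq_bigr => j Hj; rewrite ex // ey.
  - by apply: eq_bigr => i Hi; rewrite ex.
  - by apply: eq_bigr => j Hj; rewrite ey.
have eA w : obs_field w (lat_part (set_triangle p a b c)) = obs_field w (lat_part p).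
  by rewrite /obs_field; congr (_ + _); apply: eq_bigr => j Hj; rewrite ey.
have eB : lat_field (obs_part (set_triangle p a b c)) = lat_field (obs_part p).
  by rewrite /lat_field; congr (_ + _); apply: eq_bigr => i Hi; rewrite ex.
rewrite eK !eA eB !obs_part_set_triangle eqxx (negbTE vu) eqxx lat_part_set_triangle eqxx.
by congr exp; ring.
Qed.

Definition triangle : {set site} := inl u |: (inl v |: [set inr j0]).

Lemma sum_triangle p (F : jcfg -> R) (G : bool -> bool -> bool -> R) :
  (forall a b c, F (set_triangle p a b c) = G a b c) ->
  \rsum_(q | within triangle p q) F q = sum_spins3 G.
Proof.
move=> FG; rewrite sum_within3 //; last by rewrite eq_sym.
by rewrite /sum_spins3 !FG.
Qed.

Lemma obs_field_bound w y : Rabs (obs_field w y) + Rabs (J w j0) <=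
  \big[Rplus/R0]_(j < m) Rabs (J w j) + Rabs (h w).
Proof.
have -> : \big[Rplus/R0]_(j < m) Rabs (J w j) = Rabs (J w j0) + \rsum_(j | j != j0) Rabs (J w j).
  by rewrite (bigD1 j0).
rewrite /obs_field.
have := Rabs_triang (\rsum_(j | j != j0) (J w j * spin (y j))) (h w).
have := rsum_abs (fun j => j != j0) (fun j => J w j * spin (y j)).
have -> : \rsum_(j | j != j0) Rabs (J w j * spin (y j)) = \rsum_(j | j != j0) Rabs (J w j).
  by apply: eq_bigr => j _; rewrite Rabs_mult spin_abs Rmult_1_r.
lra.
Qed.

Lemma lat_field_bound x :
  Rabs (lat_field x) <= \big[Rplus/R0]_(i < n) Rabs (J i j0) + Rabs (g j0).
Proof.
have -> : \big[Rplus/R0]_(i < n) Rabs (J i j0) =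
    Rabs (J u j0) + (Rabs (J v j0) + \rsum_(i | rest_obs i) Rabs (J i j0)).
  by rewrite (bigD1 u) //= (bigD1 v).
rewrite /lat_field.
have := Rabs_triang (\rsum_(i | rest_obs i) (J i j0 * spin (x i))) (g j0).
have := rsum_abs (fun i => rest_obs i) (fun i => J i j0 * spin (x i)).
have -> : \rsum_(i | rest_obs i) Rabs (J i j0 * spin (x i)) = \rsum_(i | rest_obs i) Rabs (J i j0).
  by apply: eq_bigr => i _; rewrite Rabs_mult spin_abs Rmult_1_r.
have := Rabs_pos (J u j0); have := Rabs_pos (J v j0).
lra.
Qed.

Lemma triangle_fiber_covariance alpha lambda p :
  0 < alpha -> locally_consistent J h g alpha lambda -> J u j0 <> 0 -> J v j0 <> 0 ->
  alpha ^ 2 * exp (-12 * lambda)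
    * (fiber_mass triangle joint_weight p * fiber_mass triangle joint_weight p)
  <= wcov (within triangle p) joint_weight (shifted_spin u) (shifted_spin v).
Proof.
move=> alpha0 [sign [Jmin [row_sum col_sum]]] Ju0 Jv0.
set W := triangle_weight (frozen_energy (obs_part p) (lat_part p)) (obs_field u (lat_part p))
  (obs_field v (lat_part p)) (lat_field (obs_part p)) (J u j0) (J v j0).
have su a b c : shifted_spin u (set_triangle p a b c) = 1 + spin a.
  by rewrite /shifted_spin obs_part_set_triangle eqxx.
have sv a b c : shifted_spin v (set_triangle p a b c) = 1 + spin b.
  by rewrite /shifted_spin obs_part_set_triangle (negbTE vu) eqxx.
rewrite /wcov /fiber_mass.
rewrite (@sum_triangle p joint_weight W) => [|a b c]; last exact: weight_set_triangle.
rewrite (@sum_triangle p (fun q => joint_weight q * shifted_spin u q * shifted_spin v q)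
  (fun a b c => W a b c * (1 + spin a) * (1 + spin b))) => [|a b c];
  last by rewrite weight_set_triangle su sv.
rewrite (@sum_triangle p (fun q => joint_weight q * shifted_spin u q)
  (fun a b c => W a b c * (1 + spin a))) => [|a b c]; last by rewrite weight_set_triangle su.
rewrite (@sum_triangle p (fun q => joint_weight q * shifted_spin v q)
  (fun a b c => W a b c * (1 + spin b))) => [|a b c]; last by rewrite weight_set_triangle sv.
apply: triangle_covariance_lb => //.
- exact: Rle_trans (obs_field_bound u _) (row_sum u).
- exact: Rle_trans (obs_field_bound v _) (row_sum v).
- exact: Rle_trans (lat_field_bound _) (col_sum j0).
- exact: Jmin.
- exact: Jmin.
- by case: (sign j0) => J_sign; have := J_sign u; have := J_sign v; nra.
Qed.

End Triangle.

(* Conditioning on X_S = x_S in joint form: the joint configurations free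
   outside S and equal to x_S on S. *)
Definition free_sites (S : {set 'I_n}) : {set site} :=
  [set k | if k is inl i then i \notin S else true].
Definition boundary (xS : obs_conf n) : jcfg :=
  [ffun k => if k is inl i then xS i else false].

Lemma agrees_within S xS q :
  agrees S xS (obs_part q) = within (free_sites S) (boundary xS) q.
Proof.
apply/forallP/withinP => [agr [i|j]|fixed i]; rewrite ?inE ?negbK //.
- by move=> iS; rewrite ffunE; move: (agr i); rewrite iS ffunE => /eqP.
- apply/implyP => iS; rewrite ffunE fixed ?ffunE //.
  by rewrite inE negbK.
Qed.

Lemma sum_joint (P : pred (obs_conf n)) (F : obs_conf n -> lat_conf m -> R) :
  \rsum_(x | P x) \rsum_(y | true) F x y = \rsum_(q | P (obs_part q)) F (obs_part q) (lat_part q).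
Proof.
rewrite pair_big_dep (reindex (fun q => (obs_part q, lat_part q))) /=.
  by apply: eq_bigl => q; rewrite andbT.
pose glue (xy : obs_conf n * lat_conf m) : jcfg :=
  [ffun k => if k is inl i then xy.1 i else if k is inr j then xy.2 j else false].
apply: onW_bij; exists glue => [q|[x y]]; first by apply/ffunP => -[i|j]; rewrite !ffunE.
by congr pair; apply/ffunP => i; rewrite !ffunE.
Qed.

Lemma partition_gt0 S xS : 0 < fiber_mass (free_sites S) joint_weight (boundary xS).
Proof. by apply: fiber_mass_gt0 => q; apply: exp_pos. Qed.

Lemma cond_exp_joint S xS (F : obs_conf n -> R) :
  cond_exp J h g S xS F =
  (\rsum_(q | within (free_sites S) (boundary xS) q) (joint_weight q * F (obs_part q)))
  / fiber_mass (free_sites S) joint_weight (boundary xS).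
Proof.
rewrite /cond_exp /prob_cond /rbm_prob !sum_joint.
under eq_bigl do rewrite agrees_within.
under [X in _ / X]eq_bigl do rewrite agrees_within.
have Z0 : 0 < rbm_Z J h g.
  apply: (rsum_gt0 (i0 := [ffun => true])) => [x _||] //.
    by apply: rsum_ge0 => y _; apply/Rlt_le/exp_pos.
  apply: (rsum_gt0 (i0 := [ffun => true])) => [y _||] //; last exact: exp_pos.
  exact/Rlt_le/exp_pos.
have Zf := partition_gt0 S xS.
rewrite /fiber_mass /joint_weight /joint_energy in Zf *.
have num : \rsum_(q | within (free_sites S) (boundary xS) q)
    (F (obs_part q) * (exp (rbm_energy J h g (obs_part q) (lat_part q)) / rbm_Z J h g)) =
  (\rsum_(q | within (free_sites S) (boundary xS) q)
    (exp (rbm_energy J h g (obs_part q) (lat_part q)) * F (obs_part q))) / rbm_Z J h g.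
  by rewrite -rsum_divr; apply: eq_bigr => q _; field; lra.
rewrite num rsum_divr; set N := \rsum_(q | _) (_ * F _); set D := \rsum_(q | _) exp _.
by field; split; apply: Rgt_not_eq.
Qed.

Lemma cond_cov_joint S xS u v :
  cond_cov J h g S xS u v =
  wcov (within (free_sites S) (boundary xS)) joint_weight (shifted_spin u) (shifted_spin v)
  / (fiber_mass (free_sites S) joint_weight (boundary xS)
     * fiber_mass (free_sites S) joint_weight (boundary xS)).
Proof.
have Z0 := partition_gt0 S xS.
rewrite /shifted_spin wcov_shift1 /cond_cov !cond_exp_joint /wcov.
rewrite (eq_bigr _ (fun q _ => Rmult_assoc _ _ _)).
move: Z0; rewrite /fiber_mass.
set Z := \rsum_(q | _) joint_weight q.
set Suv := \rsum_(q | _) (_ * (spin _ * spin _)).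
set Su := \rsum_(q | _) (_ * spin (obs_part _ u)).
set Sv := \rsum_(q | _) (_ * spin (obs_part _ v)).
by move=> Z0; field; apply: Rgt_not_eq.
Qed.

End RBMLattice.

Unset Implicit Arguments.

Theorem lemma1 (n m : nat) (J : 'I_n -> 'I_m -> R) (h : 'I_n -> R) (g : 'I_m -> R)
  (alpha lambda : R) :
  0 < alpha ->
  locally_consistent J h g alpha lambda ->
  forall (u : 'I_n) (S : {set 'I_n}) (xS : obs_conf n),
  u \notin S ->
  forall v : 'I_n,
  in_N2 J u v -> v \notin S -> v <> u ->
  alpha ^ 2 * exp (-12 * lambda) <= cond_cov J h g S xS u v.
Proof.
move=> alpha0 lc u S xS uS v [j0 [Jv0 Ju0]] vS vu.
have [sign _] := lc.
have Z0 := partition_gt0 J h g S xS.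
rewrite cond_cov_joint; apply: ler_pdivr; first exact: Rmult_lt_0_compat.
apply: (covariance_from_fibers (C := triangle u v j0)).
- by rewrite !subUset !sub1set !inE /= uS vS.
- by move=> p; apply: exp_pos.
- exact: shifted_spin_ge0.
- exact: shifted_spin_ge0.
- exact: joint_weight_fkg.
- exact: shifted_spin_increasing.
- exact: shifted_spin_increasing.
- by move=> p; apply: triangle_fiber_covariance => //; apply/eqP.
Qed.
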